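(* Let $p_0$ be a probability density w.r.t. a $\sigma$-finite measure $\pi$ on $(\mathcal X,\mathcal B)$, $\mathbb P_0(B):=\int_Bp_0\,d\pi$, and $Q:\mathcal X\to(0,\infty)$ measurable with $Q_*:=\operatorname*{ess\,sup}_\pi Q\in(0,\infty)$, $Q\le Q_*$ everywhere, and $\mathbb P_0(A)>0$ where $A=\{Q=Q_*\}$. Fix $\eta>0$ and suppose there exists $\delta>0$ with $$\mathbb P_0\bigl(\{x:Q_*-\delta\le Q(x)<Q_*\}\bigr)>0\quad\text{and}\quad (Q_*-\delta)e^\eta\ge Q_*.$$ Then there exists a measurable $\Delta r$ with $\|\Delta r\|_\infty=\eta$ such that $\mathbb P_0(A_{\Delta r})>0$ and $d_{\rm TV}(p_{\infty,\Delta r},p_{\infty,0})=1$.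
   Context: For $\Delta r\in L^\infty(\pi)$: $Q_{\Delta r}(x):=Q(x)e^{\Delta r(x)}$, $Q_{*,\Delta r}:=\operatorname*{ess\,sup}_\pi Q_{\Delta r}$, $A_{\Delta r}:=\{x:Q_{\Delta r}(x)=Q_{*,\Delta r}\}$, and, when $\mathbb P_0(A_{\Delta r})>0$, $p_{\infty,\Delta r}(x):=p_0(x)\mathbf 1_{A_{\Delta r}}(x)/\mathbb P_0(A_{\Delta r})$ (with $A_0=A$). In the paper $Q(x)=e^{r(x)}\mathbb E[e^{\varepsilon(x)}]$ for a reward $r$ and noise field $\varepsilon$, so $Q_{\Delta r}$ corresponds to the perturbed reward $r+\Delta r$, and $p_{\infty,\Delta r}$ is the limit of the purely synthetic retraining dynamics under the perturbed reward. $d_{\rm TV}(p,q)=\frac12\int|p-q|\,d\pi$. *)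

From HB Require Import structures.
From mathcomp Require Import all_boot all_order all_algebra.
From mathcomp Require Import all_classical all_reals all_analysis.
From mathcomp Require Import ess_sup_inf.
Set Implicit Arguments. Unset Strict Implicit. Unset Printing Implicit Defensive.
Import Order.TTheory GRing.Theory Num.Theory.
Import numFieldNormedType.Exports.
Local Open Scope classical_set_scope.
Local Open Scope ring_scope.

Section defs.
Context {d : measure_display} {T : measurableType d} {R : realType}.
Variable pi : {measure set T -> \bar R}.

Definition P0 (p0 : T -> R) (B : set T) : \bar R := (\int[pi]_(x in B) (p0 x)%:E)%E.

Definition Qpert (Q dr : T -> R) (x : T) : R := Q x * expR (dr x).

Definition Qstar (Q dr : T -> R) : \bar R := ess_sup pi (fun x => (Qpert Q dr x)%:E).

Definition Aset (Q dr : T -> R) : set T := [set x | (Qpert Q dr x)%:E = Qstar Q dr].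

Definition p_inf (p0 Q dr : T -> R) (x : T) : R :=
  p0 x * \1_(Aset Q dr) x / fine (P0 p0 (Aset Q dr)).

Definition Linf_norm (f : T -> R) : \bar R := ess_sup pi (fun x => (`|f x|)%:E).

Definition dTV (p q : T -> R) : \bar R :=
  ((2^-1)%:E * \int[pi]_x (`|p x - q x|)%:E)%E.
End defs.

From HB Require Import structures.
From mathcomp Require Import all_boot all_order all_algebra.
From mathcomp Require Import all_classical all_reals all_analysis.
From mathcomp Require Import ess_sup_inf.
From mathcomp Require Import measurable_realfun.
Set Implicit Arguments.
Unset Strict Implicit.
Unset Printing Implicit Defensive.
Import Order.TTheory GRing.Theory Num.Theory.
Import numFieldNormedType.Exports.
Local Open Scope classical_set_scope.
Local Open Scope ring_scope.

(* Write B for the band {Q_* - delta <= Q < Q_*} and c := (Q_* - delta) e^eta,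
   so that c >= Q_*.  Lift Q to exactly c on B (costing at most eta, since
   Q >= c e^-eta there) and lower it by e^-eta elsewhere, so that
   Q e^{Delta r} < Q <= c off B.  Then the perturbed maximiser set is B, which
   has positive mass and is disjoint from A = {Q = Q_*}: the two limit densities
   live on disjoint sets, so their total variation distance is 1.  The sup norm
   of Delta r is attained (= eta) on A. *)

Section ess_sup_attained.
Context d {T : measurableType d} {R : realType}.
Variable mu : {measure set T -> \bar R}.
Local Open Scope ereal_scope.

Lemma ess_sup_ge_on (f : T -> \bar R) (S : set T) (a : \bar R) :
  measurable S -> 0 < mu S -> (forall x, S x -> a <= f x) -> a <= ess_sup mu f.
Proof.
move=> mS muS_gt0 Sa; rewrite leNgt; apply/negP => sup_lt_a.
have [N [mN muN0 fN]] := ess_sup_ge mu f.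
have SN : S `<=` N.
  move=> x Sx; apply: fN => /= f_le.
  by move: (lt_le_trans sup_lt_a (Sa x Sx)); rewrite ltNge f_le.
by move: muS_gt0; rewrite measure_gt0 (subset_measure0 mS mN SN muN0) eqxx.
Qed.

Lemma ess_sup_attained (f : T -> \bar R) (S : set T) (a : \bar R) :
  measurable S -> 0 < mu S -> (forall x, f x <= a) -> (forall x, S x -> f x = a) ->
  ess_sup mu f = a.
Proof.
move=> mS muS_gt0 f_le fS; apply/eqP; rewrite eq_le; apply/andP; split.
  by apply/ess_supP; exact: nearW.
by apply: (ess_sup_ge_on mS muS_gt0) => x /fS ->.
Qed.

End ess_sup_attained.

Section conditional_density.
Context d {T : measurableType d} {R : realType}.
Variables (pi : {measure set T -> \bar R}) (p0 : T -> R).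
Hypotheses (mp0 : measurable_fun [set: T] p0) (p0_ge0 : forall x, 0 <= p0 x).
Hypothesis p0_int1 : (\int[pi]_x (p0 x)%:E = 1)%E.

Definition cond_density (S : set T) (x : T) : R :=
  p0 x * \1_S x / fine (P0 pi p0 S).

Lemma p_infE (Q dr : T -> R) : p_inf pi p0 Q dr = cond_density (Aset pi Q dr).
Proof. by []. Qed.

Lemma P0_ge0 (S : set T) : (0 <= P0 pi p0 S)%E.
Proof. by apply: integral_ge0 => x _; rewrite lee_fin. Qed.

Lemma P0_le1 (S : set T) : measurable S -> (P0 pi p0 S <= 1)%E.
Proof.
move=> mS; rewrite -p0_int1; apply: ge0_subset_integral => //.
  exact/measurable_EFinP.
by move=> x _; rewrite lee_fin.
Qed.

Lemma P0_fin_num (S : set T) : measurable S -> P0 pi p0 S \is a fin_num.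
Proof.
move=> mS; rewrite ge0_fin_numE ?P0_ge0 //.
exact: le_lt_trans (P0_le1 mS) (ltry _).
Qed.

Lemma P0_gt0_measure_gt0 (S : set T) :
  measurable S -> (0 < P0 pi p0 S)%E -> (0 < pi S)%E.
Proof.
move=> mS P0S_gt0; rewrite lt0e measure_ge0 andbT; apply/eqP => piS0.
move: P0S_gt0; rewrite /P0 null_set_integral // ?ltxx //.
by apply/measurable_EFinP; exact: measurable_funTS.
Qed.

Lemma cond_density_ge0 (S : set T) (x : T) : 0 <= cond_density S x.
Proof. by rewrite divr_ge0 ?mulr_ge0 ?indicE ?fine_ge0 ?P0_ge0. Qed.

Lemma measurable_cond_density (S : set T) :
  measurable S -> measurable_fun [set: T] (cond_density S).
Proof. by move=> mS; apply: measurable_funM => //; exact: measurable_funM. Qed.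

Lemma integral_cond_density (S : set T) :
  measurable S -> (0 < P0 pi p0 S)%E -> (\int[pi]_x (cond_density S x)%:E = 1)%E.
Proof.
move=> mS P0S_gt0; rewrite -(fineK (P0_fin_num mS)) lte_fin in P0S_gt0.
transitivity (\int[pi]_(x in S) ((fine (P0 pi p0 S))^-1%:E * (p0 x)%:E))%E.
  rewrite [RHS]integral_mkcond; apply: eq_integral => x _.
  rewrite patchE /cond_density indicE; case: (x \in S) => /=.
    by rewrite mulr1 -EFinM mulrC.
  by rewrite mulr0 mul0r.
rewrite ge0_integralZl_EFin //.
- by rewrite -/(P0 pi p0 S) -{2}(fineK (P0_fin_num mS)) -EFinM mulVf ?gt_eqF.
- by move=> x _; rewrite lee_fin.
- by apply/measurable_EFinP; exact: measurable_funTS.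
- by rewrite invr_ge0 ltW.
Qed.

Lemma cond_density_out (S : set T) (x : T) : ~ S x -> cond_density S x = 0.
Proof. by move=> NSx; rewrite /cond_density indicE memNset // mulr0 mul0r. Qed.

Lemma dTV_cond_density_disjoint (A B : set T) :
  measurable A -> measurable B -> A `&` B = set0 ->
  (0 < P0 pi p0 A)%E -> (0 < P0 pi p0 B)%E ->
  dTV pi (cond_density A) (cond_density B) = 1%E.
Proof.
move=> mA mB AB0 P0A_gt0 P0B_gt0.
have dist_sum x : `|cond_density A x - cond_density B x|
    = cond_density A x + cond_density B x.
  have [Ax|NAx] := pselect (A x).
    have NBx : ~ B x by move=> Bx; have : (A `&` B) x by []; rewrite AB0.
    by rewrite (cond_density_out NBx) subr0 addr0 ger0_norm ?cond_density_ge0.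
  by rewrite (cond_density_out NAx) sub0r add0r normrN ger0_norm ?cond_density_ge0.
rewrite /dTV; under eq_integral do rewrite dist_sum EFinD.
rewrite ge0_integralD //; first last.
- by apply/measurable_EFinP; exact: measurable_cond_density.
- by move=> x _; rewrite lee_fin cond_density_ge0.
- by apply/measurable_EFinP; exact: measurable_cond_density.
- by move=> x _; rewrite lee_fin cond_density_ge0.
rewrite !integral_cond_density // -EFinD -EFinM.
by rewrite -mulr2n -mulr_natr mulVf ?pnatr_eq0.
Qed.

End conditional_density.

Lemma Qpert0 d (T : measurableType d) (R : realType) (Q : T -> R) :
  Qpert Q (fun=> 0) = Q.
Proof. by apply/funext => x; rewrite /Qpert expR0 mulr1. Qed.

Lemma Aset0 d (T : measurableType d) (R : realType)
    (pi : {measure set T -> \bar R}) (Q : T -> R) (Qs : R) :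
  ess_sup pi (EFin \o Q) = Qs%:E -> Aset pi Q (fun=> 0) = [set x | Q x = Qs].
Proof.
move=> ess_supQ; apply/seteqP; split => x;
  rewrite /Aset /Qstar Qpert0 ess_supQ /=; [by case | by move->].
Qed.

Section band_perturbation.
Context d {T : measurableType d} {R : realType}.
Variables (Q : T -> R) (Qs eta l : R).
Hypotheses (mQ : measurable_fun [set: T] Q) (Q_gt0 : forall x, 0 < Q x).
Hypotheses (Q_le : forall x, Q x <= Qs) (eta_gt0 : 0 < eta) (l_gt0 : 0 < l).
Hypothesis Qs_le : Qs <= l * expR eta.

Definition in_band (x : T) : bool := (l <= Q x) && (Q x < Qs).

Definition band_perturbation (x : T) : R :=
  if in_band x then ln (l * expR eta) - ln (Q x) else - eta.

Let c_gt0 : 0 < l * expR eta.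
Proof. by rewrite mulr_gt0 ?expR_gt0. Qed.

Lemma Qpert_in_band (x : T) :
  in_band x -> Qpert Q band_perturbation x = l * expR eta.
Proof.
move=> bx; rewrite /Qpert /band_perturbation bx expRB !lnK ?posrE //.
by rewrite mulrC divfK ?gt_eqF.
Qed.

Lemma Qpert_out_band (x : T) :
  ~~ in_band x -> Qpert Q band_perturbation x < l * expR eta.
Proof.
move=> /negbTE bx; rewrite /Qpert /band_perturbation bx.
apply: lt_le_trans (le_trans (Q_le x) Qs_le).
by rewrite gtr_pMr // expR_lt1 oppr_lt0.
Qed.

Lemma norm_band_perturbation_le (x : T) : `|band_perturbation x| <= eta.
Proof.
rewrite /band_perturbation; case: ifP => [/andP [l_le lt_Qs] | _].
  have Q_le_c : Q x <= l * expR eta by rewrite (le_trans (ltW lt_Qs)).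
  rewrite ger0_norm ?subr_ge0 ?ler_ln ?posrE //.
  by rewrite -ler_expR expRB !lnK ?posrE // ler_pdivrMr // mulrC ler_wpM2l.
by rewrite normrN gtr0_norm.
Qed.

Lemma norm_band_perturbation_out (x : T) :
  ~~ in_band x -> `|band_perturbation x| = eta.
Proof. by move=> /negbTE bx; rewrite /band_perturbation bx normrN gtr0_norm. Qed.

Lemma measurable_in_band : measurable_fun [set: T] in_band.
Proof.
by apply: measurable_and; [exact: measurable_fun_ler | exact: measurable_fun_ltr].
Qed.

Lemma measurable_band : measurable [set x | in_band x].
Proof. by rewrite -[X in measurable X]setTI; exact: measurable_in_band. Qed.

Lemma measurable_band_perturbation : measurable_fun [set: T] band_perturbation.
Proof.
apply: measurable_fun_ifT; [exact: measurable_in_band | | exact: measurable_cst].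
by apply: measurable_funB => //; exact: measurableT_comp.
Qed.

Variable pi : {measure set T -> \bar R}.

Lemma Linf_norm_band_perturbation (S : set T) :
  measurable S -> (0 < pi S)%E -> (forall x, S x -> ~~ in_band x) ->
  Linf_norm pi band_perturbation = eta%:E.
Proof.
move=> mS piS_gt0 S_out; apply: (ess_sup_attained mS piS_gt0).
  by move=> x; rewrite lee_fin norm_band_perturbation_le.
by move=> x /S_out/norm_band_perturbation_out ->.
Qed.

Lemma Aset_band_perturbation :
  (0 < pi [set x | in_band x])%E ->
  Aset pi Q band_perturbation = [set x | in_band x].
Proof.
move=> pi_band_gt0.
have Qstar_c : Qstar pi Q band_perturbation = (l * expR eta)%:E.
  apply: (ess_sup_attained measurable_band pi_band_gt0).
    move=> x; rewrite lee_fin.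
    by have [/Qpert_in_band ->|/Qpert_out_band/ltW] := boolP (in_band x).
  by move=> x /Qpert_in_band ->.
apply/seteqP; split => x; rewrite /Aset /= Qstar_c; last by move/Qpert_in_band ->.
move=> /(congr1 fine) /= Qpert_c; apply/negPn/negP => /Qpert_out_band.
by rewrite Qpert_c ltxx.
Qed.

End band_perturbation.

Theorem theorem7 (d : measure_display) (T : measurableType d) (R : realType)
  (pi : {measure set T -> \bar R}) (p0 Q : T -> R) (Qs eta : R) :
  sigma_finite [set: T] pi ->
  measurable_fun [set: T] p0 -> (forall x, 0 <= p0 x) ->
  (\int[pi]_x (p0 x)%:E = 1)%E ->
  measurable_fun [set: T] Q -> (forall x, 0 < Q x) ->
  ess_sup pi (EFin \o Q) = Qs%:E -> 0 < Qs ->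
  (forall x, Q x <= Qs) ->
  (0 < P0 pi p0 [set x | Q x = Qs])%E ->
  0 < eta ->
  (exists delta : R, 0 < delta /\
     (0 < P0 pi p0 [set x | ((Qs - delta <= Q x) && (Q x < Qs))%R])%E /\
     Qs <= (Qs - delta) * expR eta) ->
  exists dr : T -> R,
    measurable_fun [set: T] dr /\
    Linf_norm pi dr = eta%:E /\
    (0 < P0 pi p0 (Aset pi Q dr))%E /\
    dTV pi (p_inf pi p0 Q dr) (p_inf pi p0 Q (fun _ => 0)) = 1%E.
Proof.
move=> _ mp0 p0_ge0 p0_int1 mQ Q_gt0 ess_supQ Qs_gt0 Q_le PA eta_gt0.
move=> [delta [_ [Pband Qs_le]]].
have l_gt0 : 0 < Qs - delta.
  by rewrite -(pmulr_lgt0 _ (expR_gt0 eta)) (lt_le_trans Qs_gt0).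
pose band := [set x | in_band Q Qs (Qs - delta) x].
have mA : measurable [set x | Q x = Qs].
  by rewrite -[X in measurable X]setTI; apply: (mQ measurableT [set Qs]).
have mband : measurable band by exact: measurable_band.
have A_out x : Q x = Qs -> ~~ in_band Q Qs (Qs - delta) x.
  by rewrite /in_band => ->; rewrite ltxx andbF.
have band_A0 : band `&` [set x | Q x = Qs] = set0.
  by apply/seteqP; split => // x [band_x /A_out]; rewrite band_x.
have piA := P0_gt0_measure_gt0 mp0 mA PA.
have piband := P0_gt0_measure_gt0 mp0 mband Pband.
exists (band_perturbation Q Qs eta (Qs - delta)); split.
  exact: measurable_band_perturbation.
split.
  exact: (Linf_norm_band_perturbation Q_gt0 eta_gt0 l_gt0 Qs_le mA piA A_out).
rewrite !p_infE (Aset_band_perturbation mQ Q_gt0 Q_le eta_gt0 l_gt0 Qs_le piband).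
rewrite (Aset0 ess_supQ); split => //.
exact: dTV_cond_density_disjoint.
Qed.
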